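(* Let $N,T\ge 1$, let $p_1,\dots,p_N\in[0,1]$, and let $\mathbf U=(U_1,\dots,U_N)$ have independent coordinates $U_i\sim\mathrm{Ber}(p_i)$. Let $G\in\{0,1\}^{T\times N}$ be a fixed testing matrix, with test results $Y_t=1-\prod_{i=1}^N(1-G_{ti}U_i)$ for $t=1,\dots,T$, and DND estimate $\widehat U_i=\prod_{t=1}^T Y_t^{G_{ti}}$ (with $0^0=1$). Define the expected number of errors $$\mathcal E(G)\triangleq\mathbb E\Big[\sum_{i=1}^N \mathbb 1\{\widehat U_i\neq U_i\}\Big].$$ Then $\mathcal E(G)\ge \mathcal E_{LB}(G)$, where $$\mathcal E_{LB}(G)\triangleq\sum_{i=1}^N(1-p_i)\prod_{t=1}^T\Big(1-G_{ti}\prod_{j=1,\,j\neq i}^N(1-G_{tj}p_j)\Big).$$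
   Context: Group testing setup: $N$ individuals, individual $i$ infected ($U_i=1$) independently with known prior probability $p_i$; $G_{ti}=1$ means individual $i$ participates in test $t$; a test is positive iff it contains an infected participant. The Definite Non-Defectives (DND) decoder declares individual $i$ healthy iff $i$ participates in at least one negative test, and infected otherwise. *)

From mathcomp Require Import all_boot all_order all_algebra.
Set Implicit Arguments. Unset Strict Implicit. Unset Printing Implicit Defensive.
Import Order.TTheory GRing.Theory Num.Theory.
Local Open Scope ring_scope.

Definition prob_U (R : realFieldType) (N : nat) (p : 'I_N -> R)
  (u : {ffun 'I_N -> bool}) : R :=
  \prod_(i < N) (if u i then p i else 1 - p i).

Definition b2R (R : realFieldType) (b : bool) : R := if b then 1 else 0.

Definition test_result (R : realFieldType) (T N : nat) (G : 'M[bool]_(T, N))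
  (u : {ffun 'I_N -> bool}) (t : 'I_T) : R :=
  1 - \prod_(i < N) (1 - b2R R (G t i) * b2R R (u i)).

Definition dnd_estimate (R : realFieldType) (T N : nat) (G : 'M[bool]_(T, N))
  (u : {ffun 'I_N -> bool}) (i : 'I_N) : R :=
  \prod_(t < T) (test_result R G u t) ^+ (nat_of_bool (G t i)).

Definition expected_errors (R : realFieldType) (T N : nat) (p : 'I_N -> R)
  (G : 'M[bool]_(T, N)) : R :=
  \sum_(u : {ffun 'I_N -> bool})
     prob_U p u * \sum_(i < N) b2R R (dnd_estimate R G u i != b2R R (u i)).

Definition error_lower_bound (R : realFieldType) (T N : nat) (p : 'I_N -> R)
  (G : 'M[bool]_(T, N)) : R :=
  \sum_(i < N) (1 - p i) *
    \prod_(t < T) (1 - b2R R (G t i) *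
                        \prod_(j < N | j != i) (1 - b2R R (G t j) * p j)).

(* The error event of individual i contains the event "i is healthy and every test
   containing i also contains another infected individual", on which DND declares
   i infected.  The indicator of this event is the product of the indicator of
   "i healthy", which is nonincreasing in U_i and ignores the other coordinates,
   and of one indicator per test, each nondecreasing in the U_j with j <> i and
   independent of U_i.  For the product measure, Harris' inequality (the
   correlation inequality for functions monotone in the same direction in every
   coordinate) bounds the probability of this intersection from below by the
   product of the individual probabilities, which is the i-th term of E_LB. *)
From mathcomp Require Import all_boot all_order all_algebra.
From mathcomp Require Import ring.
Set Implicit Arguments. Unset Strict Implicit. Unset Printing Implicit Defensive.
Import Order.TTheory GRing.Theory Num.Theory.
Local Open Scope ring_scope.

Section ProductBernoulli.
Variable R : realFieldType.

Definition expect n (q : 'I_n -> R) (f : {ffun 'I_n -> bool} -> R) : R :=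
  \sum_u prob_U q u * f u.

Definition ffcons n (b : bool) (v : {ffun 'I_n -> bool}) : {ffun 'I_n.+1 -> bool} :=
  [ffun i => if unlift ord0 i is Some j then v j else b].

Lemma ffcons0 n b (v : {ffun 'I_n -> bool}) : ffcons b v ord0 = b.
Proof. by rewrite ffunE unlift_none. Qed.

Lemma ffconsS n b (v : {ffun 'I_n -> bool}) j : ffcons b v (lift ord0 j) = v j.
Proof. by rewrite ffunE liftK. Qed.

Lemma ffcons_bij n :
  bijective (fun bv : bool * {ffun 'I_n -> bool} => ffcons bv.1 bv.2).
Proof.
exists (fun u : {ffun 'I_n.+1 -> bool} => (u ord0, [ffun j => u (lift ord0 j)])).
  move=> [b v] /=.
  by rewrite ffcons0; congr pair; apply/ffunP => j; rewrite ffunE ffconsS.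
move=> u; apply/ffunP => i; rewrite ffunE; case: unliftP => [j ->|->] //.
by rewrite ffunE.
Qed.

Lemma expect_cons n (q : 'I_n.+1 -> R) f :
  expect q f =
    q ord0 * expect (fun j => q (lift ord0 j)) (fun v => f (ffcons true v))
  + (1 - q ord0) * expect (fun j => q (lift ord0 j)) (fun v => f (ffcons false v)).
Proof.
rewrite /expect (reindex _ (onW_bij _ (@ffcons_bij n))) /=.
rewrite -(pair_bigA _ (fun b v => prob_U q (ffcons b v) * f (ffcons b v))) /=.
rewrite big_bool /= !big_distrr /=.
by congr (_ + _); apply: eq_bigr => v _;
  rewrite /prob_U big_ord_recl ffcons0 mulrA;
  congr (_ * _ * _); apply: eq_bigr => j _; rewrite ffconsS.
Qed.

Lemma eq_expect n (q : 'I_n -> R) f g : f =1 g -> expect q f = expect q g.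
Proof. by move=> fg; apply: eq_bigr => u _; rewrite fg. Qed.

Lemma expect_prod n (q : 'I_n -> R) (P : pred 'I_n) (phi : 'I_n -> bool -> R) :
  expect q (fun u => \prod_(i | P i) phi i (u i)) =
  \prod_(i | P i) (q i * phi i true + (1 - q i) * phi i false).
Proof.
rewrite /expect (eq_bigr (fun u : {ffun 'I_n -> bool} => \prod_i
  ((if u i then q i else 1 - q i) * (if P i then phi i (u i) else 1)))).
  rewrite -(bigA_distr_bigA (fun i b =>
    (if b then q i else 1 - q i) * (if P i then phi i b else 1))).
  rewrite [RHS]big_mkcond; apply: eq_bigr => i _ /=.
  by rewrite big_bool /=; case: (P i); rewrite ?mulr1 ?subrKC.
by move=> u _; rewrite big_split -big_mkcond.
Qed.

Lemma expect1 n (q : 'I_n -> R) : expect q (fun _ => 1) = 1.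
Proof.
by have := expect_prod q pred0 (fun _ _ => 1); rewrite !big_pred0.
Qed.

Lemma expect_coord n (q : 'I_n -> R) i (phi : bool -> R) :
  expect q (fun u => phi (u i)) = q i * phi true + (1 - q i) * phi false.
Proof.
transitivity (expect q (fun u => \prod_(j | j == i) phi (u j))).
  by apply: eq_expect => u; rewrite big_pred1_eq.
by rewrite (expect_prod q (pred1 i) (fun _ => phi)) big_pred1_eq.
Qed.

Lemma expect_1B n (q : 'I_n -> R) g :
  expect q (fun u => 1 - g u) = 1 - expect q g.
Proof.
rewrite -[in RHS](expect1 q) /expect -sumrB.
by apply: eq_bigr => u _; rewrite mulrBr mulr1.
Qed.

Variables (n : nat) (q : 'I_n -> R).
Hypothesis q01 : forall i, 0 <= q i <= 1.

Lemma prob_U_ge0 u : 0 <= prob_U q u.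
Proof.
apply: prodr_ge0 => i _; have /andP[q0 q1] := q01 i.
by case: (u i); rewrite ?subr_ge0.
Qed.

Lemma ler_expect f g : (forall u, f u <= g u) -> expect q f <= expect q g.
Proof. by move=> fg; apply: ler_sum => u _; rewrite ler_wpM2l ?prob_U_ge0. Qed.

Lemma expect_ge0 f : (forall u, 0 <= f u) -> 0 <= expect q f.
Proof. by move=> f0; apply: sumr_ge0 => u _; rewrite mulr_ge0 ?prob_U_ge0. Qed.

End ProductBernoulli.

Section Harris.
Variable R : realFieldType.

(* [o j] orients coordinate [j]: [true] for the usual order on bool, [false]
   for the reversed one. *)
Definition le_orient n (o : 'I_n -> bool) (u v : {ffun 'I_n -> bool}) :=
  forall j, if o j then u j ==> v j else v j ==> u j.

Definition mono_orient n (o : 'I_n -> bool) (f : {ffun 'I_n -> bool} -> R) :=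
  forall u v, le_orient o u v -> f u <= f v.

Lemma mono_orient_cons n (o : 'I_n.+1 -> bool) f b :
  mono_orient o f ->
  mono_orient (fun j => o (lift ord0 j)) (fun v => f (ffcons b v)).
Proof.
move=> fo u v uv; apply: fo => j; case: (unliftP ord0 j) => [k ->|->].
  by rewrite !ffconsS; apply: uv.
by rewrite !ffcons0; case: (o _); case: b.
Qed.

Lemma mono_orient_head n (o : 'I_n.+1 -> bool) f (v : {ffun 'I_n -> bool}) :
  mono_orient o f ->
  if o ord0 then f (ffcons false v) <= f (ffcons true v)
  else f (ffcons true v) <= f (ffcons false v).
Proof.
move=> fo; case o0: (o ord0); apply: fo => j;
  case: (unliftP ord0 j) => [k ->|->]; rewrite ?ffconsS ?ffcons0 ?o0 //;
  by case: (o _); case: (v k).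
Qed.

Lemma mono_orient_prod n (o : 'I_n -> bool) (I : Type) (s : seq I) F :
  (forall x, mono_orient o (F x)) -> (forall x u, 0 <= F x u) ->
  mono_orient o (fun u => \prod_(x <- s) F x u).
Proof.
move=> Fo F0; elim: s => [|y s IH] u v uv; first by rewrite !big_nil.
by rewrite !big_cons ler_pM ?prodr_ge0 ?Fo ?IH.
Qed.

(* The one-coordinate case of Harris' inequality: an identity, since
   [Q x1 y1 + (1-Q) x0 y0 - (Q x1 + (1-Q) x0) (Q y1 + (1-Q) y0)
      = Q (1-Q) (x1 - x0) (y1 - y0)]. *)
Lemma mean_mul_le (Q x1 x0 y1 y0 : R) :
  0 <= Q <= 1 -> 0 <= (x1 - x0) * (y1 - y0) ->
  (Q * x1 + (1 - Q) * x0) * (Q * y1 + (1 - Q) * y0)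
    <= Q * (x1 * y1) + (1 - Q) * (x0 * y0).
Proof.
case/andP=> Q0 Q1 xy; rewrite -subr_ge0.
have -> : Q * (x1 * y1) + (1 - Q) * (x0 * y0)
          - (Q * x1 + (1 - Q) * x0) * (Q * y1 + (1 - Q) * y0)
        = Q * (1 - Q) * ((x1 - x0) * (y1 - y0)) by ring.
by rewrite mulr_ge0 // mulr_ge0 // subr_ge0.
Qed.

Lemma harris n (q : 'I_n -> R) (o : 'I_n -> bool) f g :
  (forall i, 0 <= q i <= 1) -> mono_orient o f -> mono_orient o g ->
  expect q f * expect q g <= expect q (fun u => f u * g u).
Proof.
elim: n q o f g => [|n IH] q o f g q01 fo go.
  have E h : expect q h = h [ffun i => false].
    rewrite /expect (big_pred1 [ffun i => false]) => [|u /=].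
      by rewrite /prob_U big_ord0 mul1r.
    by symmetry; apply/eqP/ffunP => -[].
  by rewrite !E.
rewrite !(expect_cons q).
set q' := fun j => q (lift ord0 j).
have q'01 i : 0 <= q' i <= 1 by apply: q01.
pose e h b := expect q' (fun v => h (ffcons b v)).
have e_mono h : mono_orient o h ->
  if o ord0 then e h false <= e h true else e h true <= e h false.
  move=> ho; have := mono_orient_head _ ho.
  by case: (o ord0) => hv; apply: ler_expect => // v; apply: hv.
have comono : 0 <= (e f true - e f false) * (e g true - e g false).
  have := e_mono f fo; have := e_mono g go.
  case: (o ord0) => gm fm; first by rewrite mulr_ge0 ?subr_ge0.
  by rewrite -mulrNN mulr_ge0 // oppr_ge0 subr_le0.
have /andP[q0 q1] := q01 ord0.
apply: le_trans (mean_mul_le (q01 ord0) comono) _.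
by apply: lerD; apply: ler_wpM2l; rewrite ?subr_ge0 //;
  apply: IH (mono_orient_cons _ fo) (mono_orient_cons _ go).
Qed.

Lemma harris_prod n (q : 'I_n -> R) o (I : Type) (s : seq I) F :
  (forall i, 0 <= q i <= 1) ->
  (forall x, mono_orient o (F x)) -> (forall x u, 0 <= F x u) ->
  \prod_(x <- s) expect q (F x) <= expect q (fun u => \prod_(x <- s) F x u).
Proof.
move=> q01 Fo F0; elim: s => [|y s IH].
  rewrite big_nil -[X in X <= _](expect1 q).
  by apply: ler_expect => // u; rewrite big_nil.
rewrite big_cons (le_trans (ler_wpM2l (expect_ge0 q01 (F0 y)) IH)) //.
apply: le_trans (harris q01 (Fo y) (mono_orient_prod s Fo F0)) _.
by apply: ler_expect => // u; rewrite big_cons.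
Qed.

End Harris.

Lemma b2R_ge0 (R : realFieldType) b : 0 <= b2R R b.
Proof. by case: b; rewrite /b2R. Qed.

Lemma b2R_exists (R : realFieldType) (I : finType) (P a : pred I) :
  b2R R [exists j, P j && a j] = 1 - \prod_(j | P j) (1 - b2R R (a j)).
Proof.
case: existsP => [[j /andP[Pj aj]] | noj].
  by rewrite (bigD1 j) //= aj /b2R subrr mul0r subr0.
rewrite big1 ?subrr // => j Pj; case aj: (a j); last by rewrite /b2R subr0.
by case: noj; exists j; rewrite Pj.
Qed.

Section DND.
Variables (R : realFieldType) (T N : nat) (G : 'M[bool]_(T, N)) (i : 'I_N).

(* Test [t] cannot clear individual [i]: either [i] is not in it, or it
   contains another infected individual. *)
Definition masked (u : {ffun 'I_N -> bool}) (t : 'I_T) : bool :=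
  G t i ==> [exists j, (j != i) && (G t j && u j)].

Lemma test_result_infected (u : {ffun 'I_N -> bool}) t j :
  G t j -> u j -> test_result R G u t = 1.
Proof.
move=> Gtj uj; rewrite /test_result (bigD1 j) //= Gtj uj /b2R.
by rewrite mulr1 subrr mul0r subr0.
Qed.

Lemma dnd_estimate_masked (u : {ffun 'I_N -> bool}) :
  (forall t, masked u t) -> dnd_estimate R G u i = 1.
Proof.
move=> mu; rewrite /dnd_estimate big1 // => t _.
have := mu t; rewrite /masked; case: (G t i) => //= /existsP[j /and3P[_ Gtj uj]].
by rewrite (test_result_infected Gtj uj).
Qed.

Lemma dnd_error_ge (u : {ffun 'I_N -> bool}) :
  b2R R (~~ u i) * \prod_t b2R R (masked u t)
    <= b2R R (dnd_estimate R G u i != b2R R (u i)).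
Proof.
case: (boolP [forall t, masked u t]) => [/forallP mu | /forallPn[t not_mu]].
  case: (u i); first by rewrite /b2R mul0r b2R_ge0.
  rewrite dnd_estimate_masked // big1 => [|t _]; last by rewrite /b2R mu.
  by rewrite /b2R /= mulr1 oner_eq0.
rewrite (bigD1 t) //= [b2R R (masked u t)]/b2R (negbTE not_mu).
by rewrite mul0r mulr0 b2R_ge0.
Qed.

Lemma mono_orient_healthy :
  mono_orient (fun j => j != i) (fun u : {ffun 'I_N -> bool} => b2R R (~~ u i)).
Proof. by move=> u v /(_ i); rewrite eqxx; case: (u i); case: (v i). Qed.

Lemma mono_orient_masked t :
  mono_orient (fun j => j != i) (fun u => b2R R (masked u t)).
Proof.
move=> u v uv; rewrite /masked; case: (G t i) => //=.
case: existsP => [[j /and3P[ji Gtj uj]]|_]; last exact: b2R_ge0.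
case: existsP => // - [].
by exists j; have := uv j; rewrite ji Gtj uj /= => ->.
Qed.

Variable p : 'I_N -> R.
Hypothesis p01 : forall j, 0 <= p j <= 1.

Lemma expect_healthy : expect p (fun u => b2R R (~~ u i)) = 1 - p i.
Proof.
rewrite (expect_coord p i (fun b => b2R R (~~ b))) /b2R /=.
by rewrite mulr0 add0r mulr1.
Qed.

Lemma expect_masked t :
  expect p (fun u => b2R R (masked u t))
    = 1 - b2R R (G t i) * \prod_(j | j != i) (1 - b2R R (G t j) * p j).
Proof.
rewrite /masked; case: (G t i) => /=; last first.
  by rewrite mul0r subr0 expect1.
under eq_expect => u do rewrite b2R_exists.
rewrite expect_1B (expect_prod p _ (fun j b => 1 - b2R R (G t j && b))).
rewrite mul1r; congr (1 - _); apply: eq_bigr => j _.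
by rewrite andbT andbF /b2R; case: (G t j); rewrite ?subr0; ring.
Qed.

Lemma expect_dnd_error_ge :
  (1 - p i) * \prod_t (1 - b2R R (G t i) *
                         \prod_(j | j != i) (1 - b2R R (G t j) * p j))
    <= expect p (fun u => b2R R (dnd_estimate R G u i != b2R R (u i))).
Proof.
have masked_ge0 t u : 0 <= b2R R (masked u t) by apply: b2R_ge0.
rewrite -expect_healthy; under eq_bigr => t _ do rewrite -expect_masked.
apply: le_trans (ler_expect p01 dnd_error_ge).
apply: le_trans (harris p01 mono_orient_healthy
                   (mono_orient_prod _ mono_orient_masked masked_ge0)).
rewrite ler_wpM2l ?expect_ge0 //; first by move=> u; apply: b2R_ge0.
exact: harris_prod p01 mono_orient_masked masked_ge0.
Qed.

End DND.

Theorem theorem1 (R : realFieldType) (N T : nat) (hN : (1 <= N)%N) (hT : (1 <= T)%N)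
  (p : 'I_N -> R) (hp : forall i, 0 <= p i <= 1) (G : 'M[bool]_(T, N)) :
  error_lower_bound p G <= expected_errors p G.
Proof.
rewrite /expected_errors; under eq_bigr do rewrite big_distrr.
rewrite exchange_big; apply: ler_sum => i _.
exact: expect_dnd_error_ge.
Qed.
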